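(* Let $(H,B_1,B_2)$ be a Rota-Baxter system of Hopf algebras with descendent operation $\circ$ and cocycle $\sigma$, and let $H_1=\operatorname{Im}(\sigma)$. Then (1) $H_1\circ H_1\subseteq H_1$ and $\Delta(H_1)\subseteq H_1\otimes H_1$; (2) denoting by $\circ_1,\Delta_1,\epsilon_1$ the restrictions of $\circ,\Delta,\epsilon$ to $H_1$, $(H_1,\circ_1,1)$ is a unital algebra and $(H_1,\Delta_1,\epsilon_1)$ is a cocommutative coalgebra.
   Context: $\mathbb{F}$ is a field of characteristic $0$; Sweedler notation $\Delta(a)=a_1\otimes a_2$. A Rota-Baxter system of Hopf algebras is a triple $(H,B_1,B_2)$ where $(H,\cdot,1,\Delta,\epsilon,S)$ is a cocommutative Hopf algebra and $B_1,B_2:H\to H$ are coalgebra homomorphisms with $B_1(1)=B_2(1)=1$ such that for all $a,b\in H$: $B_1(a)B_1(b)=B_1(B_1(a_1)bS(B_2(a_2)))$ and $B_2(a)B_2(b)=B_2(B_1(a_1)bS(B_2(a_2)))$. Its descendent operation is $a\circ b=B_1(a_1)bS(B_2(a_2))$ and cocycle $\sigma(a)=B_1(a_1)S(B_2(a_2))$. *)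

(* Tensor products H (x) H and H (x) H (x) H are represented by
   formal finite sums (sequences of pairs/triples) taken modulo the universal
   property of the tensor product: two formal sums are equal as tensors iff
   every bilinear (resp. trilinear) map into every F-vector space takes the
   same value on them.  Relative versions (for a subspace P of H) encode
   P (x) P in the same way, using maps that are bilinear on P. *)
From HB Require Import structures.
From mathcomp Require Import all_boot all_order all_algebra.
Set Implicit Arguments. Unset Strict Implicit. Unset Printing Implicit Defensive.
Import GRing.Theory.
Local Open Scope ring_scope.

Section Tensors.
Variables (F : fieldType) (H : lmodType F).
Implicit Types (P : H -> Prop).

Definition subspace_on P :=
  P 0 /\ forall (a : F) x y, P x -> P y -> P (a *: x + y).

Definition linear_on P (W : lmodType F) (g : H -> W) :=
  forall (a : F) x y, P x -> P y -> g (a *: x + y) = a *: g x + g y.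

Definition bilin_on P (W : lmodType F) (f : H -> H -> W) :=
  (forall y, P y -> linear_on P (fun x => f x y)) /\
  (forall x, P x -> linear_on P (f x)).

Definition trilin_on P (W : lmodType F) (f : H -> H -> H -> W) :=
  [/\ forall y z, P y -> P z -> linear_on P (fun x => f x y z),
      forall x z, P x -> P z -> linear_on P (fun y => f x y z)
    & forall x y, P x -> P y -> linear_on P (f x y)].

Definition tsum2 (W : lmodType F) (f : H -> H -> W) (s : seq (H * H)) : W :=
  \sum_(p <- s) f p.1 p.2.
Definition tsum3 (W : lmodType F) (f : H -> H -> H -> W) (s : seq (H * H * H)) : W :=
  \sum_(p <- s) f p.1.1 p.1.2 p.2.

Definition tensor2_in P (s : seq (H * H)) :=
  forall p, p \in s -> P p.1 /\ P p.2.
Definition tensor3_in P (s : seq (H * H * H)) :=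
  forall p, p \in s -> [/\ P p.1.1, P p.1.2 & P p.2].

(* equality in P (x) P, resp. P (x) P (x) P  (P := everything gives H (x) H) *)
Definition teq2_on P (s t : seq (H * H)) :=
  forall (W : lmodType F) (f : H -> H -> W), bilin_on P f -> tsum2 f s = tsum2 f t.
Definition teq3_on P (s t : seq (H * H * H)) :=
  forall (W : lmodType F) (f : H -> H -> H -> W), trilin_on P f -> tsum3 f s = tsum3 f t.

Definition tscale (a : F) (s : seq (H * H)) := [seq (a *: p.1, p.2) | p <- s].
Definition tswap (s : seq (H * H)) := [seq (p.2, p.1) | p <- s].
Definition cop_left (D : H -> seq (H * H)) (s : seq (H * H)) : seq (H * H * H) :=
  flatten [seq [seq (q.1, q.2, p.2) | q <- D p.1] | p <- s].
Definition cop_right (D : H -> seq (H * H)) (s : seq (H * H)) : seq (H * H * H) :=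
  flatten [seq [seq (p.1, q.1, q.2) | q <- D p.2] | p <- s].

Record cocomm_coalgebra_on P (D : H -> seq (H * H)) (e : H -> F) : Prop := {
  coalg_subspace : subspace_on P;
  coalg_range : forall x, P x -> tensor2_in P (D x);
  coalg_D_linear : forall (a : F) x y, P x -> P y ->
      teq2_on P (D (a *: x + y)) (tscale a (D x) ++ D y);
  coalg_e_linear : forall (a : F) x y, P x -> P y -> e (a *: x + y) = a * e x + e y;
  coalg_coassoc : forall x, P x -> teq3_on P (cop_left D (D x)) (cop_right D (D x));
  coalg_counit_l : forall x, P x -> \sum_(p <- D x) e p.1 *: p.2 = x;
  coalg_counit_r : forall x, P x -> \sum_(p <- D x) e p.2 *: p.1 = x;
  coalg_cocomm : forall x, P x -> teq2_on P (D x) (tswap (D x))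
}.

End Tensors.

Section Hopf.
Variables (F : fieldType) (H : algType F).

Definition allH : H -> Prop := fun _ => True.

Record unital_algebra_on (P : H -> Prop) (m : H -> H -> H) (u : H) : Prop := {
  ualg_subspace : subspace_on P;
  ualg_unit_in : P u;
  ualg_closed : forall x y, P x -> P y -> P (m x y);
  ualg_bilin : bilin_on P m;
  ualg_assoc : forall x y z, P x -> P y -> P z -> m (m x y) z = m x (m y z);
  ualg_unit_l : forall x, P x -> m u x = x;
  ualg_unit_r : forall x, P x -> m x u = x
}.

Record cocomm_hopf (D : H -> seq (H * H)) (e : H -> F) (S : H -> H) : Prop := {
  hopf_coalg : cocomm_coalgebra_on allH D e;
  hopf_D_mul : forall x y,
      teq2_on allH (D (x * y)) [seq (p.1 * q.1, p.2 * q.2) | p <- D x, q <- D y];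
  hopf_D_one : teq2_on allH (D 1) [:: (1, 1)];
  hopf_e_mul : forall x y, e (x * y) = e x * e y;
  hopf_e_one : e 1 = 1;
  hopf_S_linear : linear_on allH S;
  hopf_antipode_l : forall x, \sum_(p <- D x) S p.1 * p.2 = e x *: 1;
  hopf_antipode_r : forall x, \sum_(p <- D x) p.1 * S p.2 = e x *: 1
}.

Record coalg_hom (D : H -> seq (H * H)) (e : H -> F) (B : H -> H) : Prop := {
  chom_linear : linear_on allH B;
  chom_D : forall x, teq2_on allH (D (B x)) [seq (B p.1, B p.2) | p <- D x];
  chom_e : forall x, e (B x) = e x
}.

Definition desc_op (D : H -> seq (H * H)) (S B1 B2 : H -> H) (a b : H) : H :=
  \sum_(p <- D a) B1 p.1 * b * S (B2 p.2).

Definition cocycle (D : H -> seq (H * H)) (S B1 B2 : H -> H) (a : H) : H :=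
  \sum_(p <- D a) B1 p.1 * S (B2 p.2).

Record RB_system (D : H -> seq (H * H)) (e : H -> F) (S B1 B2 : H -> H) : Prop := {
  rbs_hopf : cocomm_hopf D e S;
  rbs_B1_hom : coalg_hom D e B1;
  rbs_B2_hom : coalg_hom D e B2;
  rbs_B1_one : B1 1 = 1;
  rbs_B2_one : B2 1 = 1;
  rbs_B1 : forall a b, B1 a * B1 b = B1 (desc_op D S B1 B2 a b);
  rbs_B2 : forall a b, B2 a * B2 b = B2 (desc_op D S B1 B2 a b)
}.

End Hopf.

(** Since [H] is cocommutative, [Δ(a ∘ b) = (a₁ ∘ b₁) ⊗ (a₂ ∘ b₂)], and the
    Rota-Baxter identities [B_i(a₁ ∘ b₁) = B_i(a₁) B_i(b₁)] together with
    [S(xy) = S(y) S(x)] turn [(a ∘ b) ∘ c] into [a ∘ (b ∘ c)]; moreover [1 ∘ x = x].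
    As [σ(a) = a ∘ 1], associativity gives [σ(a ∘ b) = a ∘ σ(b)]: the image of [σ]
    is a left ideal for [∘], it contains [σ(1) = 1], and [σ] is the identity on it.
    It is a subcoalgebra because [Δ(σ u) = σ(u₁) ⊗ σ(u₂)] and [ε ∘ σ = ε].
    Elements of [H ⊗ H] are formal sums compared through all bilinear maps, so
    every identity of the Hopf algebra is used as an identity of Sweedler sums. *)

From HB Require Import structures.
From mathcomp Require Import all_boot all_order all_algebra.
Set Implicit Arguments. Unset Strict Implicit. Unset Printing Implicit Defensive.
Import GRing.Theory.
Local Open Scope ring_scope.

Local Notation bilinear f := (bilinear_for *:%R *:%R f).

Notation "\tsum_ ( u '⊗' v <- s ) E" := (tsum2 (fun u v => E) s)
  (at level 41, E at level 41, u, v at level 50,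
   format "'[' \tsum_ ( u  ⊗  v  <-  s ) '/  '  E ']'") : ring_scope.

(** * Linear maps *)

Section Linearity.

Variable F : fieldType.

Section LinearFor.
Variables (U : lmodType F) (V : zmodType) (s : GRing.Scale.law F V) (g : U -> V).
Hypothesis g_lin : linear_for s g.
HB.instance Definition _ := GRing.isLinear.Build F U V s g g_lin.

Lemma linear_for0 : g 0 = 0.
Proof. exact: raddf0. Qed.

Lemma linear_forZ a x : g (a *: x) = s a (g x).
Proof. exact: linearZ_LR. Qed.

Lemma linear_for_sum I (r : seq I) (h : I -> U) :
  g (\sum_(i <- r) h i) = \sum_(i <- r) g (h i).
Proof. exact: raddf_sum. Qed.
End LinearFor.

Definition trilinear (U W : lmodType F) (G : U -> U -> U -> W) :=
  [/\ forall y z, linear (fun x => G x y z), forall x z, linear (fun y => G x y z)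
    & forall x y, linear (G x y)].

Definition quadrilinear (U W : lmodType F) (G : U -> U -> U -> U -> W) :=
  [/\ forall y z t, linear (fun x => G x y z t), forall x z t, linear (fun y => G x y z t),
      forall x y t, linear (fun z => G x y z t) & forall x y z, linear (G x y z)].

Lemma linear_id (U : lmodType F) : linear (fun x : U => x).
Proof. by []. Qed.

Lemma linear_comp (U V W : lmodType F) (g : U -> V) (h : V -> W) :
  linear g -> linear h -> linear (fun x => h (g x)).
Proof. by move=> g_lin h_lin a x y; rewrite g_lin h_lin. Qed.

Lemma linear_mull (A : algType F) (c : A) : linear (fun x : A => c * x).
Proof. by move=> a x y; rewrite mulrDr scalerAr. Qed.

Lemma linear_mulr (A : algType F) (c : A) : linear (fun x : A => x * c).
Proof. by move=> a x y; rewrite mulrDl scalerAl. Qed.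

Lemma linear_sum_param (U W : lmodType F) I (r : seq I) (G : U -> I -> W) :
  (forall i, linear (G^~ i)) -> linear (fun x => \sum_(i <- r) G x i).
Proof.
move=> G_lin a x y; rewrite scaler_sumr -big_split.
by apply: eq_bigr => i _; rewrite G_lin.
Qed.

Lemma linear_tsum2_param (U W : lmodType F) (s : seq (U * U)) (G : U -> U -> U -> W) :
  (forall u v, linear (fun x => G x u v)) -> linear (fun x => tsum2 (G x) s).
Proof. by move=> G_lin; apply: linear_sum_param => p; apply: G_lin. Qed.

End Linearity.

Create HintDb linear.
#[export] Hint Resolve linear_mull linear_mulr : linear.

(* [linearity] proves (multi)linearity goals by splitting the body of the map
   into compositions with maps known to be linear (database [linear] and
   bilinear hypotheses) and along formal tensor sums.  It matches [GRing.linear_for] rather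
   than [linear] because goals coming from [bilinear_for] carry their scaling
   under a coercion, which [linear] patterns do not match; [not_identity]
   rules out the decomposition through the identity, which would loop. *)
Ltac linearity :=
  cbv beta;
  lazymatch goal with
  | |- bilinear_for _ _ _ => split => ?; linearity
  | |- trilinear _ => split; intros; linearity
  | |- quadrilinear _ => split; intros; linearity
  | |- GRing.linear_for _ (fun x => x) => exact: linear_id
  | |- _ => first [ solve [typeclasses eauto with linear] | linearity_comp ]
  end
with linearity_comp :=
  match goal with
  | |- GRing.linear_for _ (fun x => tsum2 (@?G x) _) =>
      apply: linear_tsum2_param => ? ?; linearity
  | |- GRing.linear_for _ (fun x => tsum2 ?f (?D (@?g x))) => not_identity g;
      apply: (@linear_comp _ _ _ _ g (fun y => tsum2 f (D y))); linearity
  | |- GRing.linear_for _ (fun x => ?f (@?g x) ?v) => not_identity g;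
      apply: (@linear_comp _ _ _ _ g (fun y => f y v)); linearity
  | |- GRing.linear_for _ (fun x => ?f ?u (@?g x)) => not_identity g;
      apply: (@linear_comp _ _ _ _ g (f u)); linearity
  | |- GRing.linear_for _ (fun x => ?f (@?g x)) => not_identity g;
      apply: (@linear_comp _ _ _ _ g f); linearity
  end
with not_identity g := lazymatch g with fun x => x => fail | _ => idtac end.

#[export] Hint Extern 1 (bilinear_for _ _ _) => linearity : linear.
#[export] Hint Extern 1 (GRing.linear_for _ _) =>
  match goal with f_bil : bilinear_for _ _ _ |- _ => first [exact: f_bil.1 | exact: f_bil.2] end
  : linear.

(** * Formal tensors *)

Section Tensors.

Variables (F : fieldType) (H : algType F) (W : lmodType F).
Implicit Types (s t : seq (H * H)) (f g : H -> H -> W).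

Lemma eq_tsum2 s f g : (forall u v, f u v = g u v) -> tsum2 f s = tsum2 g s.
Proof. by move=> fg; apply: eq_bigr => p _; apply: fg. Qed.

Lemma exchange_tsum2 s t (G : H -> H -> H -> H -> W) :
  \tsum_(u ⊗ v <- s) \tsum_(a ⊗ b <- t) G u v a b =
  \tsum_(a ⊗ b <- t) \tsum_(u ⊗ v <- s) G u v a b.
Proof. exact: exchange_big. Qed.

Lemma scaler_tsum2 (k : F) s f :
  k *: tsum2 f s = \tsum_(u ⊗ v <- s) k *: f u v.
Proof. exact: scaler_sumr. Qed.

Lemma tsum2_teq2 s t f : teq2_on (@allH F _) s t -> bilinear f -> tsum2 f s = tsum2 f t.
Proof. by move=> st [f_l f_r]; apply: st; split=> x _ a y z _ _; [apply: f_l | apply: f_r]. Qed.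

Lemma bilin_on_allH f : bilin_on (@allH F H) f -> bilinear f.
Proof. by case=> f_l f_r; split=> x a y z; [apply: f_l | apply: f_r]. Qed.

Lemma tsum3_teq3 (s t : seq (H * H * H)) (G : H -> H -> H -> W) :
  teq3_on (@allH F _) s t -> trilinear G -> tsum3 G s = tsum3 G t.
Proof.
by move=> st [G1 G2 G3]; apply: st; split=> x y _ _ a z w _ _; [apply: G1 | apply: G2 | apply: G3].
Qed.

Lemma tsum3_cop_left (D : H -> seq (H * H)) s (G : H -> H -> H -> W) :
  tsum3 G (cop_left D s) = \tsum_(u ⊗ v <- s) \tsum_(a ⊗ b <- D u) G a b v.
Proof. by rewrite /tsum3 big_flatten big_map; apply: eq_bigr => p _; rewrite big_map. Qed.

Lemma tsum3_cop_right (D : H -> seq (H * H)) s (G : H -> H -> H -> W) :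
  tsum3 G (cop_right D s) = \tsum_(u ⊗ v <- s) \tsum_(a ⊗ b <- D v) G u a b.
Proof. by rewrite /tsum3 big_flatten big_map; apply: eq_bigr => p _; rewrite big_map. Qed.

Lemma mulr_tsum2l s (f : H -> H -> H) c : tsum2 f s * c = \tsum_(u ⊗ v <- s) f u v * c.
Proof. exact: mulr_suml. Qed.

Lemma mulr_tsum2r s (f : H -> H -> H) c : c * tsum2 f s = \tsum_(u ⊗ v <- s) c * f u v.
Proof. exact: mulr_sumr. Qed.

End Tensors.

(** * Cocommutative Hopf algebras *)

Section Hopf.

Variables (F : fieldType) (H : algType F) (D : H -> seq (H * H)) (e : H -> F) (S : H -> H).
Hypothesis hopf : cocomm_hopf D e S.
Let coalg := hopf_coalg hopf.

Lemma antipode_linear : linear S.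
Proof. by move=> a x y; apply: (hopf_S_linear hopf). Qed.

Lemma counit_scalar : scalar e.
Proof. by move=> a x y; apply: (coalg_e_linear coalg). Qed.

Lemma sweedler_linear (W : lmodType F) (f : H -> H -> W) :
  bilinear f -> linear (fun x => \tsum_(u ⊗ v <- D x) f u v).
Proof.
move=> f_bil a x y; rewrite (tsum2_teq2 (coalg_D_linear coalg a I I) f_bil).
rewrite /tsum2 big_cat big_map scaler_sumr; congr (_ + _).
by apply: eq_bigr => p _; rewrite (linear_forZ (f_bil.1 _)).
Qed.

Local Hint Resolve antipode_linear sweedler_linear : linear.

Lemma sweedler_coassoc (W : lmodType F) {x : H} (G : H -> H -> H -> W) : trilinear G ->
  \tsum_(u ⊗ v <- D x) \tsum_(a ⊗ b <- D u) G a b v =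
  \tsum_(u ⊗ v <- D x) \tsum_(a ⊗ b <- D v) G u a b.
Proof.
move=> G_tri; rewrite -tsum3_cop_left -tsum3_cop_right.
exact: tsum3_teq3 (coalg_coassoc coalg (x := x) I) G_tri.
Qed.

Lemma sweedler_cocomm (W : lmodType F) {x : H} (f : H -> H -> W) : bilinear f ->
  \tsum_(u ⊗ v <- D x) f u v = \tsum_(u ⊗ v <- D x) f v u.
Proof.
by move=> f_bil; rewrite (tsum2_teq2 (coalg_cocomm coalg (x := x) I) f_bil) /tsum2 big_map.
Qed.

Lemma sweedler_counit_l (W : lmodType F) {x : H} (g : H -> W) :
  linear g -> \tsum_(u ⊗ v <- D x) e u *: g v = g x.
Proof.
move=> g_lin; rewrite -[in RHS](coalg_counit_l coalg (x := x) I) (linear_for_sum g_lin).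
by apply: eq_bigr => p _; rewrite (linear_forZ g_lin).
Qed.

Lemma sweedler_counit_r (W : lmodType F) {x : H} (g : H -> W) :
  linear g -> \tsum_(u ⊗ v <- D x) e v *: g u = g x.
Proof.
move=> g_lin; rewrite -[in RHS](coalg_counit_r coalg (x := x) I) (linear_for_sum g_lin).
by apply: eq_bigr => p _; rewrite (linear_forZ g_lin).
Qed.

Lemma sweedler_mul (W : lmodType F) {x y : H} (f : H -> H -> W) : bilinear f ->
  \tsum_(u ⊗ v <- D (x * y)) f u v =
  \tsum_(a ⊗ b <- D x) \tsum_(c ⊗ d <- D y) f (a * c) (b * d).
Proof.
by move=> f_bil; rewrite (tsum2_teq2 (hopf_D_mul hopf x y) f_bil) /tsum2 big_allpairs_dep.
Qed.

Lemma sweedler_one (W : lmodType F) (f : H -> H -> W) :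
  bilinear f -> \tsum_(u ⊗ v <- D 1) f u v = f 1 1.
Proof. by move=> f_bil; rewrite (tsum2_teq2 (hopf_D_one hopf) f_bil) /tsum2 big_seq1. Qed.

Lemma sweedler_antipode_l (W : lmodType F) {x : H} (g : H -> W) : linear g ->
  \tsum_(u ⊗ v <- D x) g (S u * v) = e x *: g 1.
Proof.
by move=> g_lin; rewrite -(linear_forZ g_lin) -(hopf_antipode_l hopf) (linear_for_sum g_lin).
Qed.

Lemma sweedler_antipode_r (W : lmodType F) {x : H} (g : H -> W) : linear g ->
  \tsum_(u ⊗ v <- D x) g (u * S v) = e x *: g 1.
Proof.
by move=> g_lin; rewrite -(linear_forZ g_lin) -(hopf_antipode_r hopf) (linear_for_sum g_lin).
Qed.

Lemma coalg_hom_linear B : coalg_hom D e B -> linear B.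
Proof. by move=> B_hom a x y; apply: (chom_linear B_hom). Qed.

Lemma sweedler_coalg_hom (W : lmodType F) {x : H} (B : H -> H) (f : H -> H -> W) :
  coalg_hom D e B -> bilinear f ->
  \tsum_(u ⊗ v <- D (B x)) f u v = \tsum_(u ⊗ v <- D x) f (B u) (B v).
Proof. by move=> B_hom f_bil; rewrite (tsum2_teq2 (chom_D B_hom x) f_bil) /tsum2 big_map. Qed.

Definition conv2 (phi psi : H -> H -> H) x y :=
  \tsum_(a ⊗ b <- D x) \tsum_(c ⊗ d <- D y) phi a c * psi b d.

Lemma conv2A phi psi chi x y : bilinear phi -> bilinear psi -> bilinear chi ->
  conv2 (conv2 phi psi) chi x y = conv2 phi (conv2 psi chi) x y.
Proof.
move=> phi_bil psi_bil chi_bil.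
have -> : conv2 (conv2 phi psi) chi x y =
  \tsum_(u ⊗ b2 <- D x) \tsum_(a ⊗ b1 <- D u) \tsum_(w ⊗ d2 <- D y) \tsum_(c ⊗ d1 <- D w)
     phi a c * psi b1 d1 * chi b2 d2.
  apply: eq_tsum2 => u b2; rewrite exchange_tsum2; apply: eq_tsum2 => w d2.
  rewrite mulr_tsum2l; apply: eq_tsum2 => a b1; exact: mulr_tsum2l.
rewrite sweedler_coassoc; last by linearity.
apply: eq_tsum2 => u v; rewrite /conv2.
under eq_tsum2 => a b.
  rewrite sweedler_coassoc; last by linearity.
  over.
rewrite exchange_tsum2; apply: eq_tsum2 => c w.
rewrite mulr_tsum2r; apply: eq_tsum2 => a b.
rewrite mulr_tsum2r; apply: eq_tsum2 => d1 d2.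
by rewrite mulrA.
Qed.

Definition counit2 x y : H := (e x * e y)%:A.

Lemma conv2_counit2l psi x y : bilinear psi -> conv2 counit2 psi x y = psi x y.
Proof.
move=> psi_bil; rewrite -[RHS](sweedler_counit_l (g := psi^~ y)); last by linearity.
apply: eq_tsum2 => a b.
rewrite -(sweedler_counit_l (x := y) (g := psi b)) ?scaler_tsum2; last by linearity.
by apply: eq_tsum2 => c d; rewrite mulr_algl scalerA.
Qed.

Lemma conv2_counit2r phi x y : bilinear phi -> conv2 phi counit2 x y = phi x y.
Proof.
move=> phi_bil; rewrite -[RHS](sweedler_counit_r (g := phi^~ y)); last by linearity.
apply: eq_tsum2 => a b.
rewrite -(sweedler_counit_r (x := y) (g := phi a)) ?scaler_tsum2; last by linearity.
by apply: eq_tsum2 => c d; rewrite mulr_algr scalerA.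
Qed.

Lemma conv2_inverse_unique phi mu psi x y :
  bilinear phi -> bilinear mu -> bilinear psi ->
  (forall x y, conv2 phi mu x y = counit2 x y) ->
  (forall x y, conv2 mu psi x y = counit2 x y) ->
  phi x y = psi x y.
Proof.
move=> phi_bil mu_bil psi_bil phi_mu mu_psi.
rewrite -(conv2_counit2r _ _ phi_bil) -(conv2_counit2l _ _ psi_bil).
transitivity (conv2 phi (conv2 mu psi) x y).
  by apply: eq_tsum2 => a b; apply: eq_tsum2 => c d; rewrite mu_psi.
rewrite -conv2A //.
by apply: eq_tsum2 => a b; apply: eq_tsum2 => c d; rewrite phi_mu.
Qed.

(* [x ⊗ y ↦ S(xy)] and [x ⊗ y ↦ S(y) S(x)] are a left and a right convolution
   inverse of the multiplication. *)
Lemma antipodeM x y : S (x * y) = S y * S x.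
Proof.
apply: (conv2_inverse_unique (phi := fun x y => S (x * y)) (mu := *%R)
  (psi := fun x y => S y * S x)); try by linearity.
- move=> {}x {}y; rewrite /conv2 -(sweedler_mul (f := fun u v => S u * v)); last by linearity.
  by rewrite (sweedler_antipode_l (g := id)) // (hopf_e_mul hopf).
- move=> {}x {}y; rewrite /conv2 /counit2 mulrC -scalerA.
  under eq_tsum2 => a b.
    under eq_tsum2 => c d do rewrite mulrA -(mulrA a).
    rewrite (sweedler_antipode_r (g := fun z => a * z * S b)); last by linearity.
    over.
  under eq_tsum2 do rewrite mulr1.
  by rewrite -scaler_tsum2 (sweedler_antipode_r (g := id)).
Qed.

Lemma antipode1 : S 1 = 1.
Proof.
rewrite -[RHS]scale1r -(hopf_e_one hopf) -(sweedler_antipode_l (g := id)) //.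
by rewrite sweedler_one ?mulr1 //; linearity.
Qed.

Lemma counit_antipode x : e (S x) = e x.
Proof.
have e_lin := counit_scalar.
rewrite -(sweedler_counit_r (g := S)); last exact: antipode_linear.
rewrite -[RHS]mulr1 -(hopf_e_one hopf) -(linear_forZ e_lin) -(sweedler_antipode_l (g := id)) //.
rewrite !(linear_for_sum e_lin); apply: eq_bigr => p _.
by rewrite (linear_forZ e_lin) (hopf_e_mul hopf) mulrC.
Qed.

Lemma sweedler_antipode_coprod (W : lmodType F) {k : H} (g : H -> H -> W) : bilinear g ->
  \tsum_(a ⊗ b <- D k) \tsum_(a1 ⊗ a2 <- D a) \tsum_(b1 ⊗ b2 <- D b) g (a1 * S b2) (a2 * S b1)
  = e k *: g 1 1.
Proof.
move=> g_bil; rewrite sweedler_coassoc; last by linearity.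
rewrite -(sweedler_antipode_r (g := g^~ 1)); last by linearity.
apply: eq_tsum2 => a1 c.
rewrite -(sweedler_coassoc (G := fun a2 b1 b2 => g (a1 * S b2) (a2 * S b1))); last by linearity.
rewrite -(sweedler_counit_l (g := fun b2 => g (a1 * S b2) 1)); last by linearity.
apply: eq_tsum2 => m b2.
by rewrite (sweedler_antipode_r (g := g (a1 * S b2))) //; linearity.
Qed.

(* [Δ(S h) = Δ(S h₁) ε(h₂) = Δ(S h₁) Δ(h₂) (S h₄ ⊗ S h₃)
          = ε(h₁) S h₃ ⊗ S h₂], then cocommutativity. *)
Lemma sweedler_antipode (W : lmodType F) {h : H} (f : H -> H -> W) : bilinear f ->
  \tsum_(u ⊗ v <- D (S h)) f u v = \tsum_(u ⊗ v <- D h) f (S u) (S v).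
Proof.
move=> f_bil.
have antipode_collapse w b :
    \tsum_(u ⊗ a <- D w) \tsum_(a1 ⊗ a2 <- D a) \tsum_(b1 ⊗ b2 <- D b)
      \tsum_(s1 ⊗ s2 <- D (S u)) f (s1 * (a1 * S b2)) (s2 * (a2 * S b1))
    = e w *: \tsum_(b1 ⊗ b2 <- D b) f (S b2) (S b1).
  under eq_tsum2 => u a do
    (rewrite exchange_tsum2; under eq_tsum2 => b1 b2 do rewrite exchange_tsum2).
  rewrite exchange_tsum2 scaler_tsum2; apply: eq_tsum2 => b1 b2.
  transitivity (e w *: \tsum_(t1 ⊗ t2 <- D 1) f (t1 * S b2) (t2 * S b1)); last first.
    by rewrite sweedler_one ?mul1r //; linearity.
  rewrite -(sweedler_antipode_l (g := fun z => \tsum_(t1 ⊗ t2 <- D z) f (t1 * S b2) (t2 * S b1)));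
    last by linearity.
  apply: eq_tsum2 => u a; rewrite sweedler_mul; last by linearity.
  by apply: eq_tsum2 => s1 s2; apply: eq_tsum2 => a1 a2; rewrite !mulrA.
transitivity (\tsum_(w ⊗ b <- D h) e w *: \tsum_(b1 ⊗ b2 <- D b) f (S b2) (S b1)); last first.
  rewrite (sweedler_counit_l (g := fun b => \tsum_(b1 ⊗ b2 <- D b) f (S b2) (S b1)));
    last by linearity.
  by rewrite sweedler_cocomm; last by linearity.
under [RHS]eq_tsum2 do rewrite -antipode_collapse.
rewrite [RHS]sweedler_coassoc; last by linearity.
rewrite -(sweedler_counit_r (g := fun u => \tsum_(s1 ⊗ s2 <- D (S u)) f s1 s2));
  last by linearity.
apply: eq_tsum2 => u v.
transitivity (e v *: \tsum_(s1 ⊗ s2 <- D (S u)) f (s1 * 1) (s2 * 1)).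
  by congr (_ *: _); apply: eq_tsum2 => s1 s2; rewrite !mulr1.
by rewrite -(sweedler_antipode_coprod (k := v)
  (g := fun x y => \tsum_(s1 ⊗ s2 <- D (S u)) f (s1 * x) (s2 * y)));
  last by linearity.
Qed.

Lemma sweedler_coassoc4 (W : lmodType F) {x : H} (G : H -> H -> H -> H -> W) : quadrilinear G ->
  \tsum_(p ⊗ q <- D x) \tsum_(a1 ⊗ a2 <- D p) \tsum_(b1 ⊗ b2 <- D q) G a1 a2 b1 b2 =
  \tsum_(a1 ⊗ r <- D x) \tsum_(s ⊗ b2 <- D r) \tsum_(a2 ⊗ b1 <- D s) G a1 a2 b1 b2.
Proof.
case=> G1 G2 G3 G4; rewrite sweedler_coassoc; last by linearity.
by apply: eq_tsum2 => a1 r; rewrite -sweedler_coassoc; last by linearity.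
Qed.

Lemma sweedler_swap_middle (W : lmodType F) {x : H} (G : H -> H -> H -> H -> W) : quadrilinear G ->
  \tsum_(p ⊗ q <- D x) \tsum_(a1 ⊗ a2 <- D p) \tsum_(b1 ⊗ b2 <- D q) G a1 a2 b1 b2 =
  \tsum_(p ⊗ q <- D x) \tsum_(a1 ⊗ a2 <- D p) \tsum_(b1 ⊗ b2 <- D q) G a1 b1 a2 b2.
Proof.
case=> G1 G2 G3 G4; rewrite !sweedler_coassoc4; try by linearity.
apply: eq_tsum2 => a1 r; apply: eq_tsum2 => s b2.
by rewrite sweedler_cocomm; last by linearity.
Qed.

End Hopf.

#[export] Hint Resolve antipode_linear sweedler_linear : linear.

(** * Rota-Baxter systems *)

Section RotaBaxter.
Variables (F : fieldType) (H : algType F) (D : H -> seq (H * H)) (e : H -> F)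
  (S B1 B2 : H -> H).
Hypothesis rbs : RB_system D e S B1 B2.
Let hopf := rbs_hopf rbs.
Local Hint Resolve hopf coalg_hom_linear rbs_B1_hom rbs_B2_hom : linear.

Local Notation "a ∘ b" := (desc_op D S B1 B2 a b) (at level 40, left associativity).
Local Notation σ := (cocycle D S B1 B2).

Lemma desc_opE a b : a ∘ b = \tsum_(u ⊗ v <- D a) B1 u * b * S (B2 v).
Proof. by []. Qed.

Lemma cocycleE a : σ a = \tsum_(u ⊗ v <- D a) B1 u * S (B2 v).
Proof. by []. Qed.

Lemma desc_op_linear_l b : linear (fun a => a ∘ b).
Proof. by apply: (sweedler_linear hopf (f := fun u v => B1 u * b * S (B2 v))); linearity. Qed.

Lemma desc_op_linear_r a : linear (desc_op D S B1 B2 a).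
Proof. by apply: linear_sum_param => p; linearity. Qed.

Lemma cocycle_linear : linear σ.
Proof. by apply: (sweedler_linear hopf (f := fun u v => B1 u * S (B2 v))); linearity. Qed.

Local Hint Resolve desc_op_linear_l desc_op_linear_r cocycle_linear : linear.

Lemma sweedler_desc_op (W : lmodType F) {a b : H} (f : H -> H -> W) : bilinear f ->
  \tsum_(u ⊗ v <- D (a ∘ b)) f u v =
  \tsum_(a1 ⊗ a2 <- D a) \tsum_(b1 ⊗ b2 <- D b) f (a1 ∘ b1) (a2 ∘ b2).
Proof.
move=> f_bil.
have expand p q : \tsum_(u ⊗ v <- D (B1 p * b * S (B2 q))) f u v =
    \tsum_(p1 ⊗ p2 <- D p) \tsum_(q1 ⊗ q2 <- D q) \tsum_(b1 ⊗ b2 <- D b)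
      f (B1 p1 * b1 * S (B2 q1)) (B1 p2 * b2 * S (B2 q2)).
  rewrite (sweedler_mul hopf) ?(sweedler_mul hopf) ?(sweedler_coalg_hom (rbs_B1_hom rbs));
    try by linearity.
  apply: eq_tsum2 => p1 p2; rewrite exchange_tsum2; apply: eq_tsum2 => b1 b2.
  rewrite (sweedler_antipode hopf) ?(sweedler_coalg_hom (rbs_B2_hom rbs)) //; linearity.
transitivity (\tsum_(p ⊗ q <- D a) \tsum_(u ⊗ v <- D (B1 p * b * S (B2 q))) f u v).
  by rewrite [a ∘ b]desc_opE (linear_for_sum (sweedler_linear hopf f_bil)).
under eq_tsum2 do rewrite expand.
rewrite (sweedler_swap_middle hopf); last by linearity.
apply: eq_tsum2 => p q.
transitivity (\tsum_(b1 ⊗ b2 <- D b) \tsum_(a1 ⊗ a2 <- D p) \tsum_(a3 ⊗ a4 <- D q)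
    f (B1 a1 * b1 * S (B2 a2)) (B1 a3 * b2 * S (B2 a4))).
  rewrite [RHS]exchange_tsum2; apply: eq_tsum2 => a1 a2; exact: exchange_tsum2.
apply: eq_tsum2 => b1 b2; rewrite (linear_for_sum (f_bil.1 _)); apply: eq_bigr => r _.
by rewrite /desc_op (linear_for_sum (f_bil.2 _)).
Qed.

Lemma desc_opA a b c : a ∘ b ∘ c = a ∘ (b ∘ c).
Proof.
rewrite [LHS]desc_opE (sweedler_desc_op (f := fun u v => B1 u * c * S (B2 v))); last by linearity.
rewrite desc_opE; apply: eq_tsum2 => a1 a2; rewrite desc_opE mulr_tsum2r mulr_tsum2l.
apply: eq_tsum2 => b1 b2.
by rewrite -(rbs_B1 rbs) -(rbs_B2 rbs) (antipodeM hopf) !mulrA.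
Qed.

Lemma desc_op1x x : 1 ∘ x = x.
Proof.
rewrite desc_opE (sweedler_one hopf (f := fun u v => B1 u * x * S (B2 v))); last by linearity.
by rewrite (rbs_B1_one rbs) (rbs_B2_one rbs) (antipode1 hopf) mul1r mulr1.
Qed.

Lemma desc_opx1 a : a ∘ 1 = σ a.
Proof. by rewrite desc_opE cocycleE; apply: eq_tsum2 => u v; rewrite mulr1. Qed.

Lemma cocycle_desc_op a b : σ (a ∘ b) = a ∘ σ b.
Proof. by rewrite -!desc_opx1 desc_opA. Qed.

Lemma cocycle1 : σ 1 = 1.
Proof. by rewrite -desc_opx1 desc_op1x. Qed.

Lemma cocycle_idem a : σ (σ a) = σ a.
Proof. by rewrite -[σ a]desc_opx1 cocycle_desc_op cocycle1. Qed.

Lemma sweedler_cocycle (W : lmodType F) {u : H} (f : H -> H -> W) : bilinear f ->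
  \tsum_(a ⊗ b <- D (σ u)) f a b = \tsum_(a ⊗ b <- D u) f (σ a) (σ b).
Proof.
move=> f_bil; rewrite -desc_opx1 sweedler_desc_op //; apply: eq_tsum2 => a b.
by rewrite (sweedler_one hopf (f := fun b1 b2 => f (a ∘ b1) (b ∘ b2))) ?desc_opx1 //; linearity.
Qed.

Lemma counit_cocycle u : e (σ u) = e u.
Proof.
have e_lin := counit_scalar hopf.
rewrite cocycleE -[in RHS](sweedler_counit_l hopf (x := u) (@linear_id _ H)).
rewrite !(linear_for_sum e_lin); apply: eq_bigr => p _.
rewrite (hopf_e_mul hopf) (counit_antipode hopf) (chom_e (rbs_B1_hom rbs)).
by rewrite (chom_e (rbs_B2_hom rbs)) (linear_forZ e_lin).
Qed.

Definition cocycle_image x := exists a, x = σ a.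

Lemma cocycle_image_cocycle a : cocycle_image (σ a).
Proof. by exists a. Qed.

Lemma cocycle_image_fixed x : cocycle_image x -> σ x = x.
Proof. by case=> a ->; rewrite cocycle_idem. Qed.

Lemma cocycle_image_subspace : subspace_on cocycle_image.
Proof.
split; first by exists 0; rewrite (linear_for0 cocycle_linear).
by move=> k _ _ [x ->] [y ->]; exists (k *: x + y); rewrite cocycle_linear.
Qed.

Lemma desc_op_cocycle_image x y : cocycle_image y -> cocycle_image (x ∘ y).
Proof. by case=> b ->; exists (x ∘ b); rewrite cocycle_desc_op. Qed.

Lemma bilin_on_cocycle_image (W : lmodType F) (f : H -> H -> W) :
  bilin_on cocycle_image f -> bilinear (fun u v => f (σ u) (σ v)).
Proof.
by case=> f_l f_r; split=> v a x y; rewrite cocycle_linear; [apply: f_l | apply: f_r];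
  apply: cocycle_image_cocycle.
Qed.

Lemma trilin_on_cocycle_image (W : lmodType F) (G : H -> H -> H -> W) :
  trilin_on cocycle_image G -> trilinear (fun u v w => G (σ u) (σ v) (σ w)).
Proof.
by case=> G1 G2 G3; split=> u v a x y; rewrite cocycle_linear; [apply: G1 | apply: G2 | apply: G3];
  apply: cocycle_image_cocycle.
Qed.

Definition cocycle_coprod x := [seq (σ p.1, σ p.2) | p <- D x].

Lemma tsum2_cocycle_coprod (W : lmodType F) x (f : H -> H -> W) :
  tsum2 f (cocycle_coprod x) = \tsum_(u ⊗ v <- D x) f (σ u) (σ v).
Proof. exact: big_map. Qed.

Lemma cocycle_coprod_in x : tensor2_in cocycle_image (cocycle_coprod x).
Proof. by move=> p /mapP [q _ ->]; split; apply: cocycle_image_cocycle. Qed.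

Lemma tsum2_cocycle_coprod_cocycle (W : lmodType F) u (f : H -> H -> W) :
  bilinear (fun a b => f (σ a) (σ b)) ->
  tsum2 f (cocycle_coprod (σ u)) = \tsum_(a ⊗ b <- D u) f (σ a) (σ b).
Proof.
move=> f_bil; rewrite tsum2_cocycle_coprod sweedler_cocycle //.
by apply: eq_tsum2 => a b; rewrite !cocycle_idem.
Qed.

Lemma coprod_eq_cocycle_coprod x :
  cocycle_image x -> teq2_on (@allH F H) (D x) (cocycle_coprod x).
Proof.
case=> a -> W f /bilin_on_allH f_bil.
by rewrite tsum2_cocycle_coprod_cocycle ?sweedler_cocycle //; linearity.
Qed.

Lemma cocycle_image_algebra : unital_algebra_on cocycle_image (desc_op D S B1 B2) 1.
Proof.
split.
- exact: cocycle_image_subspace.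
- by exists 1; rewrite cocycle1.
- by move=> x y _; apply: desc_op_cocycle_image.
- by split=> x _ a y z _ _; [apply: desc_op_linear_l | apply: desc_op_linear_r].
- by move=> x y z _ _ _; apply: desc_opA.
- by move=> x _; apply: desc_op1x.
- by move=> x /cocycle_image_fixed x_fix; rewrite desc_opx1.
Qed.

Lemma cocycle_coprod_coassoc (W : lmodType F) x (G : H -> H -> H -> W) :
  trilinear (fun u v w => G (σ u) (σ v) (σ w)) ->
  tsum3 G (cop_left cocycle_coprod (cocycle_coprod x)) =
  tsum3 G (cop_right cocycle_coprod (cocycle_coprod x)).
Proof.
case=> G1 G2 G3; rewrite tsum3_cop_left tsum3_cop_right !tsum2_cocycle_coprod.
transitivity (\tsum_(u ⊗ v <- D x) \tsum_(a ⊗ b <- D u) G (σ a) (σ b) (σ v)).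
  by apply: eq_tsum2 => u v; rewrite tsum2_cocycle_coprod_cocycle; last by linearity.
rewrite (sweedler_coassoc hopf); last by linearity.
by apply: eq_tsum2 => u v; rewrite tsum2_cocycle_coprod_cocycle; last by linearity.
Qed.

Lemma cocycle_image_coalgebra : cocomm_coalgebra_on cocycle_image cocycle_coprod e.
Proof.
split.
- exact: cocycle_image_subspace.
- by move=> x _; apply: cocycle_coprod_in.
- move=> a x y _ _ W f /bilin_on_cocycle_image f_bil.
  rewrite tsum2_cocycle_coprod (sweedler_linear hopf f_bil) /tsum2 big_cat !big_map scaler_sumr.
  congr (_ + _); apply: eq_bigr => p _.
  by rewrite -(linear_forZ cocycle_linear) (linear_forZ (f_bil.1 _)).
- by move=> a x y _ _; apply: (counit_scalar hopf).
- by move=> x _ W G /trilin_on_cocycle_image; apply: cocycle_coprod_coassoc.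
- move=> x /cocycle_image_fixed x_fix.
  rewrite big_map -[RHS]x_fix -(sweedler_counit_l hopf cocycle_linear).
  by apply: eq_bigr => p _; rewrite counit_cocycle.
- move=> x /cocycle_image_fixed x_fix.
  rewrite big_map -[RHS]x_fix -(sweedler_counit_r hopf cocycle_linear).
  by apply: eq_bigr => p _; rewrite counit_cocycle.
- move=> x _ W f /bilin_on_cocycle_image f_bil.
  by rewrite tsum2_cocycle_coprod (sweedler_cocomm hopf f_bil) /tswap /tsum2 !big_map.
Qed.

End RotaBaxter.

Theorem mainTheorem9 (F : fieldType) (charF0 : [pchar F] =i pred0)
  (H : algType F) (D : H -> seq (H * H)) (e : H -> F) (S B1 B2 : H -> H) :
  RB_system D e S B1 B2 ->
  let H1 : H -> Prop := fun x => exists a, x = cocycle D S B1 B2 a in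
  (* (1) *)
  ((forall x y, H1 x -> H1 y -> H1 (desc_op D S B1 B2 x y)) /\
   (forall x, H1 x -> exists s, tensor2_in H1 s /\ teq2_on (@allH F H) (D x) s)) /\
  (* (2) *)
  (unital_algebra_on H1 (desc_op D S B1 B2) 1 /\
   exists D1 : H -> seq (H * H),
     (forall x, H1 x -> teq2_on (@allH F H) (D x) (D1 x)) /\
     cocomm_coalgebra_on H1 D1 e).
Proof.
move=> rbs H1; pose D1 := cocycle_coprod D S B1 B2.
have coprod_eq := coprod_eq_cocycle_coprod rbs.
split; split.
- by move=> x y _; apply: (desc_op_cocycle_image rbs).
- by move=> x x_in; exists (D1 x); split; [apply: cocycle_coprod_in | apply: coprod_eq].
- exact: (cocycle_image_algebra rbs).
- by exists D1; split; [apply: coprod_eq | apply: (cocycle_image_coalgebra rbs)].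
Qed.
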